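(* Let $q>0$. Let $I=(i_1,\dots,i_k)$ and $I'=(i'_1,\dots,i'_\ell)$ be two increasing sequences of positive integers with $i_k<i'_1$, and let $\pi\sim\mu_{n,q}$ for some $n\ge i'_\ell$. Then $\pi_I$ and $\pi_{I'}$ are independent.
   Context: For $q>0$ and $n\ge1$, $\mu_{n,q}(\pi)=q^{\mathrm{inv}(\pi)}/Z_{n,q}$ on $S_n$, with $\mathrm{inv}(\pi)$ the number of pairs $i<j$ with $\pi(i)>\pi(j)$ and $Z_{n,q}$ a normalizing constant. For a permutation $\pi$ and an increasing sequence of indices $I=(i_1,\dots,i_k)$, $\pi_I\in S_k$ denotes the induced relative ordering: $\pi_I(j)>\pi_I(j')$ if and only if $\pi(i_j)>\pi(i_{j'})$. *)

From mathcomp Require Import all_boot all_order all_algebra all_fingroup.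
Set Implicit Arguments. Unset Strict Implicit. Unset Printing Implicit Defensive.
Import Order.TTheory GRing.Theory Num.Theory.

(* Positions are 0-based: 'I_n = {0,...,n-1} stands for {1,...,n}. *)

Definition inv n (s : 'S_n) : nat :=
  #|[set p : 'I_n * 'I_n | (p.1 < p.2)%N && (s p.2 < s p.1)%N]|.

Local Open Scope ring_scope.

Definition mallows_Z (R : realFieldType) (n : nat) (q : R) : R :=
  \sum_(s : 'S_n) q ^+ inv s.

Definition mallows_prob (R : realFieldType) (n : nat) (q : R) (A : pred 'S_n) : R :=
  (\sum_(s : 'S_n | A s) q ^+ inv s) / mallows_Z n q.

Local Close Scope ring_scope.

Definition increasing_idx k n (I : 'I_k -> 'I_n) : Prop :=
  forall j j' : 'I_k, (j < j')%N -> (I j < I j')%N.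

(* The event "pi_I = sigma": sigma is the induced relative ordering of pi on I,
   i.e. sigma(j) > sigma(j') iff pi(i_j) > pi(i_j'). *)
Definition induced_is n k (s : 'S_n) (I : 'I_k -> 'I_n) (sigma : 'S_k) : bool :=
  [forall j : 'I_k, forall j' : 'I_k,
     (sigma j' < sigma j)%N == (s (I j') < s (I j))%N].

From Pilot Require Import Defs.
From mathcomp Require Import all_boot all_order all_algebra all_fingroup zify ring.
Import Order.TTheory GRing.Theory Num.Theory.
Set Implicit Arguments. Unset Strict Implicit. Unset Printing Implicit Defensive.

(* Split the positions at some p with I < p <= I'.  A permutation s of 'I_n is
   determined by the set S of values it takes on the first p positions and by
   its patterns (relative orders) on the first p and on the last n - p
   positions, and these three coordinates range independently over all
   possibilities.  Moreover inv s is the sum of the inversions of the two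
   patterns and of the inversions straddling position p, whose number depends
   on S alone.  Hence q ^+ inv s factors, so the two patterns are independent
   under the Mallows measure, and pi_I, pi_I' are functions of them. *)

Section Pattern.
Variables (n m : nat) (s : 'S_n) (e : 'I_m -> 'I_n).
Hypothesis e_inj : injective e.

Definition pattern_rank (i : 'I_m) : nat := #|[set j | s (e j) < s (e i)]|.

Lemma pattern_rank_lt i : pattern_rank i < m.
Proof.
have : pattern_rank i <= #|[set~ i]|.
  apply: subset_leq_card; apply/subsetP => j; rewrite !inE.
  by apply: contraTneq => ->; rewrite ltnn.
by rewrite cardsC1 card_ord; have := ltn_ord i; lia.
Qed.

Lemma pattern_rank_ltE i j : (pattern_rank i < pattern_rank j) = (s (e i) < s (e j)).
Proof.
case: (ltnP (s (e i)) (s (e j))) => sij.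
  apply: proper_card; apply/properP; split.
    by apply/subsetP => h; rewrite !inE => /ltn_trans; apply.
  by exists i; rewrite !inE ?sij ?ltnn.
rewrite ltnNge; apply/negbF; apply: subset_leq_card; apply/subsetP => h.
by rewrite !inE => /leq_trans; apply.
Qed.

Lemma pattern_rank_inj : injective (fun i => Ordinal (pattern_rank_lt i)).
Proof.
move=> i j /(congr1 val) /= rij; apply/e_inj/(@perm_inj _ s)/val_inj.
by case: (ltngtP (s (e i)) (s (e j))); rewrite // -pattern_rank_ltE rij ltnn.
Qed.

Definition pattern : 'S_m := perm pattern_rank_inj.

Lemma pattern_ltE i j : (pattern i < pattern j) = (s (e i) < s (e j)).
Proof. by rewrite !permE pattern_rank_ltE. Qed.

End Pattern.

Lemma induced_is_pattern n m k (s : 'S_n) (e : 'I_m -> 'I_n) (e_inj : injective e)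
    (J : 'I_k -> 'I_m) (sigma : 'S_k) :
  induced_is (pattern s e_inj) J sigma = induced_is s (e \o J) sigma.
Proof. by apply: eq_forallb => j; apply: eq_forallb => j'; rewrite pattern_ltE. Qed.

Lemma eq_induced_is n k (s : 'S_n) (I J : 'I_k -> 'I_n) (sigma : 'S_k) :
  I =1 J -> induced_is s I sigma = induced_is s J sigma.
Proof. by move=> eIJ; apply: eq_forallb => j; apply: eq_forallb => j'; rewrite !eIJ. Qed.

Definition inv_set n (s : 'S_n) : {set 'I_n * 'I_n} :=
  [set xy : 'I_n * 'I_n | (xy.1 < xy.2) && (s xy.2 < s xy.1)].

Lemma inv_card n (s : 'S_n) : Defs.inv s = #|inv_set s|.
Proof. by []. Qed.

Lemma inv_pattern n m (s : 'S_n) (e : 'I_m -> 'I_n) (e_inj : injective e) :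
    {mono e : i j / i < j} ->
  Defs.inv (pattern s e_inj)
  = #|[set xy in inv_set s | (xy.1 \in codom e) && (xy.2 \in codom e)]|.
Proof.
move=> e_mono.
have ee_inj : injective (fun ij : 'I_m * 'I_m => (e ij.1, e ij.2)).
  by move=> [a b] [c d] /= [/e_inj -> /e_inj ->].
rewrite inv_card -(card_imset _ ee_inj); apply: eq_card => -[x y]; rewrite !inE /=.
apply/imsetP/andP => [[[i j]] | [/andP[xy sxy] /andP[/codomP[i ex] /codomP[j ey]]]].
  rewrite inE /= pattern_ltE -e_mono => /andP[ij sij] [-> ->].
  by rewrite ij sij !codom_f.
by exists (i, j); rewrite ?inE /= -?ex -?ey // pattern_ltE -e_mono -ex -ey xy.
Qed.

Lemma card_lt_in_inj n (A : {set 'I_n}) :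
  {in A &, injective (fun x : 'I_n => #|[set y in A | y < x]|)}.
Proof.
move=> x x' xA x'A; wlog xx' : x x' xA x'A / x < x'.
  move=> W E; case: (ltngtP x x') => [xx'|x'x|/val_inj] //.
  - exact: W xA x'A xx' E.
  - exact/esym/(W x' x x'A xA x'x (esym E)).
move=> E; suff : #|[set y in A | y < x]| < #|[set y in A | y < x']| by rewrite E ltnn.
apply: proper_card; apply/properP; split.
  by apply/subsetP => y; rewrite !inE => /andP[-> /ltn_trans]; apply.
by exists x; rewrite !inE ?xx' ?ltnn ?xA.
Qed.

Section Blocks.
Variables (n p : nat) (hp : p <= n).

Definition lpos : 'I_p -> 'I_n := widen_ord hp.

Fact rpos_subproof (j : 'I_(n - p)) : p + j < n.
Proof. have := ltn_ord j; lia. Qed.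

Definition rpos (j : 'I_(n - p)) : 'I_n := Ordinal (rpos_subproof j).

Lemma lpos_inj : injective lpos.
Proof. by move=> i j /(congr1 val) ij; apply: val_inj. Qed.

Lemma rpos_inj : injective rpos.
Proof. by move=> i j /(congr1 val) /= /addnI ij; apply: val_inj. Qed.

Lemma lpos_mono : {mono lpos : i j / i < j}.
Proof. by []. Qed.

Lemma rpos_mono : {mono rpos : i j / i < j}.
Proof. by move=> i j; rewrite /= ltn_add2l. Qed.

Lemma codom_lpos y : (y \in codom lpos) = (y < p).
Proof.
apply/codomP/idP => [[i ->] | yp]; first exact: (ltn_ord i).
by exists (Ordinal yp); apply: val_inj.
Qed.

Lemma codom_rpos y : (y \in codom rpos) = (p <= y).
Proof.
apply/codomP/idP => [[i ->] | py]; first exact: leq_addr.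
have ylt : y - p < n - p by have := ltn_ord y; lia.
by exists (Ordinal ylt); apply: val_inj => /=; lia.
Qed.

Definition lvalues (s : 'S_n) : {set 'I_n} := [set s (lpos i) | i : 'I_p].

Definition lpattern (s : 'S_n) : 'S_p := pattern s lpos_inj.
Definition rpattern (s : 'S_n) : 'S_(n - p) := pattern s rpos_inj.

Lemma mem_lvalues (s : 'S_n) y : (s y \in lvalues s) = (y < p).
Proof.
by rewrite -codom_lpos; apply/imsetP/codomP => [[i _ /perm_inj ->] | [i ->]]; exists i.
Qed.

Lemma card_lvalues (s : 'S_n) : #|lvalues s| = p.
Proof. by rewrite card_imset ?cardsT ?card_ord // => i j /perm_inj /lpos_inj. Qed.

Lemma lpattern_rank (s : 'S_n) i :
  lpattern s i = #|[set y in lvalues s | y < s (lpos i)]| :> nat.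
Proof.
have slpos_inj : injective (fun j => s (lpos j)) by move=> a b /perm_inj /lpos_inj.
rewrite permE /= /pattern_rank -(card_imset _ slpos_inj); apply: eq_card => y.
rewrite !inE; apply/imsetP/andP => [[j] | [/imsetP[j _ ->] ?]].
  by rewrite inE => ? ->; rewrite mem_lvalues (ltn_ord j).
by exists j; rewrite ?inE.
Qed.

Lemma rpattern_rank (s : 'S_n) i :
  rpattern s i = #|[set y in ~: lvalues s | y < s (rpos i)]| :> nat.
Proof.
have srpos_inj : injective (fun j => s (rpos j)) by move=> a b /perm_inj /rpos_inj.
rewrite permE /= /pattern_rank -(card_imset _ srpos_inj); apply: eq_card => y.
rewrite !inE; apply/imsetP/andP => [[j] | [ys ?]].
  by rewrite inE => ? ->; rewrite mem_lvalues -leqNgt leq_addr.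
move: ys; rewrite -[y](permKV s) mem_lvalues -leqNgt -codom_rpos => /codomP[j ej].
by exists j; rewrite ?inE -ej permKV.
Qed.

Definition block_decomposition (s : 'S_n) := (lvalues s, (lpattern s, rpattern s)).

Lemma block_decomposition_inj : injective block_decomposition.
Proof.
move=> s1 s2 [eS e1 e2]; apply/permP => x.
case: (ltnP x p) => [|px].
  rewrite -codom_lpos => /codomP[i ->].
  have := congr1 (fun a : 'S_p => val (a i)) e1; rewrite /= !lpattern_rank eS.
  by apply: card_lt_in_inj; rewrite ?mem_lvalues -?eS ?mem_lvalues; exact: (ltn_ord i).
move: px; rewrite -codom_rpos => /codomP[i ->].
have := congr1 (fun b : 'S_(n - p) => val (b i)) e2; rewrite /= !rpattern_rank eS.
by apply: card_lt_in_inj; rewrite inE ?mem_lvalues -?eS ?mem_lvalues -leqNgt leq_addr.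
Qed.

Lemma block_decomposition_image :
  block_decomposition @: setT = [set t : {set 'I_n} * ('S_p * 'S_(n - p)) | #|t.1| == p].
Proof.
apply/eqP; rewrite eqEcard; apply/andP; split.
  by apply/subsetP => _ /imsetP[s _ ->]; rewrite inE card_lvalues.
rewrite card_imset; last exact: block_decomposition_inj.
have -> : [set t : {set 'I_n} * ('S_p * 'S_(n - p)) | #|t.1| == p]
          = setX [set S : {set 'I_n} | #|S| == p] setT.
  by apply/setP => t; rewrite !inE andbT.
by rewrite cardsX card_draws !cardsT card_ord card_prod !card_Sn bin_fact.
Qed.

Definition cross_inv (S : {set 'I_n}) : nat :=
  #|[set uv : 'I_n * 'I_n | [&& uv.1 \in S, uv.2 \notin S & uv.2 < uv.1]]|.

Lemma inv_blocks (s : 'S_n) :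
  Defs.inv s = Defs.inv (lpattern s) + Defs.inv (rpattern s) + cross_inv (lvalues s).
Proof.
rewrite inv_card (inv_pattern _ _ lpos_mono) (inv_pattern _ _ rpos_mono).
rewrite -(cardsID [set xy : 'I_n * 'I_n | xy.1 < p] (inv_set s)).
rewrite -(cardsID [set xy : 'I_n * 'I_n | xy.2 < p] (inv_set s :&: _)).
set L := #|_ :&: _ :&: _|; set C := #|_ :\: [set xy | _]|; set Rt := #|_ :\: _|.
have -> : L = #|[set xy in inv_set s | (xy.1 \in codom lpos) && (xy.2 \in codom lpos)]|.
  by apply: eq_card => xy; rewrite !inE !codom_lpos andbA.
have -> : Rt = #|[set xy in inv_set s | (xy.1 \in codom rpos) && (xy.2 \in codom rpos)]|.
  apply: eq_card => -[x y]; rewrite !inE !codom_rpos -!leqNgt /=.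
  case: (leqP p x) => [px | _]; last by rewrite /= andbF.
  by case: (ltnP x y) => //= xy; rewrite (leq_trans px (ltnW xy)) andbT.
suff -> : C = cross_inv (lvalues s) by rewrite addnAC.
have ss_inj : injective (fun xy : 'I_n * 'I_n => (s xy.1, s xy.2)).
  by move=> [a b] [c d] /= [/perm_inj -> /perm_inj ->].
rewrite /cross_inv -[C](card_imset _ ss_inj); apply: eq_card => -[u v].
rewrite inE /=; apply/imsetP/idP.
  case=> -[x y]; rewrite !inE /= => /and3P[x2p /andP[xy syx] x1p] [-> ->].
  by rewrite !mem_lvalues x1p x2p syx.
rewrite -[u](permKV s) -[v](permKV s) !mem_lvalues => /and3P[u1p v1p vu].
exists ((s^-1)%g u, (s^-1)%g v) => //.
by rewrite !inE /= u1p v1p vu andbT (leq_trans u1p) // leqNgt.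
Qed.

End Blocks.

Section MallowsBlocks.
Variables (R : realFieldType) (q : R) (n p : nat) (hp : p <= n).
Local Open Scope ring_scope.

Lemma sum_inv_blocks (g1 : 'S_p -> R) (g2 : 'S_(n - p) -> R) :
  \sum_(s : 'S_n) g1 (lpattern hp s) * g2 (rpattern hp s) * q ^+ Defs.inv s
  = (\sum_(S : {set 'I_n} | #|S| == p) q ^+ cross_inv S) *
    ((\sum_a g1 a * q ^+ Defs.inv a) * (\sum_b g2 b * q ^+ Defs.inv b)).
Proof.
pose G (t : {set 'I_n} * ('S_p * 'S_(n - p))) :=
  g1 t.2.1 * g2 t.2.2 * q ^+ (Defs.inv t.2.1 + Defs.inv t.2.2 + cross_inv t.1)%N.
transitivity (\sum_(s in [set: 'S_n]) G (block_decomposition hp s)).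
  by apply: eq_big => [s|s _]; rewrite ?inE // /G /= -(inv_blocks hp).
rewrite -big_imset /=; last by move=> a b _ _ /block_decomposition_inj.
rewrite (block_decomposition_image hp).
transitivity (\sum_(S : {set 'I_n} | #|S| == p) \sum_(ab : 'S_p * 'S_(n - p)) G (S, ab)).
  by rewrite pair_big_dep /=; apply: eq_bigl => -[S ab]; rewrite inE andbT.
rewrite big_distrlr mulr_suml; apply: eq_bigr => S _.
rewrite mulr_sumr -(pair_big predT predT (fun a b => G (S, (a, b)))) /=.
apply: eq_bigr => a _; rewrite mulr_sumr; apply: eq_bigr => b _.
by rewrite /G /= !exprD; ring.
Qed.

Lemma sum_inv_blocks_pred (A : pred 'S_n) (P : pred 'S_p) (Q : pred 'S_(n - p)) :
    A =1 (fun s => P (lpattern hp s) && Q (rpattern hp s)) ->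
  \sum_(s | A s) q ^+ Defs.inv s
  = (\sum_(S : {set 'I_n} | #|S| == p) q ^+ cross_inv S) *
    ((\sum_(a | P a) q ^+ Defs.inv a) * (\sum_(b | Q b) q ^+ Defs.inv b)).
Proof.
have sum_natr (T : finType) (D : pred T) (F : T -> R) :
    \sum_(t | D t) F t = \sum_t (D t)%:R * F t.
  by rewrite big_mkcond; apply: eq_bigr => t _; rewrite mulr_natl mulrb.
move=> eA; rewrite (eq_bigl _ _ eA) sum_natr.
rewrite [\sum_(a | P a) _]sum_natr [\sum_(b | Q b) _]sum_natr -sum_inv_blocks.
by apply: eq_bigr => s _; rewrite -natrM mulnb.
Qed.

Lemma mallows_prob_blocks_indep (A B : pred 'S_n) (P : pred 'S_p) (Q : pred 'S_(n - p)) :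
    A =1 P \o lpattern hp -> B =1 Q \o rpattern hp -> mallows_Z n q != 0 ->
  mallows_prob q (fun s => A s && B s) = mallows_prob q A * mallows_prob q B.
Proof.
move=> eA eB; rewrite /mallows_prob /mallows_Z.
rewrite (@sum_inv_blocks_pred (fun s => A s && B s) P Q); last first.
  by move=> s /=; rewrite eA eB.
rewrite (@sum_inv_blocks_pred A P predT); last by move=> s; rewrite eA andbT.
rewrite (@sum_inv_blocks_pred B predT Q); last by move=> s; rewrite eB.
rewrite (@sum_inv_blocks_pred predT predT predT) //.
rewrite !mulf_eq0 !negb_or => /and3P[c_neq0 a_neq0 b_neq0].
by field; apply/and3P.
Qed.

End MallowsBlocks.

Lemma mallows_Z_gt0 (R : realFieldType) (q : R) n : (0 < q)%R -> (0 < mallows_Z n q)%R.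
Proof.
move=> q_gt0; rewrite /mallows_Z (bigD1 1%g) //= ltr_wpDr ?exprn_gt0 //.
by apply: sumr_ge0 => s _; rewrite ltW ?exprn_gt0.
Qed.

Theorem lemma2p5 (R : realFieldType) (q : R) (hq : (0 < q)%R)
  (n k l : nat) (I : 'I_k -> 'I_n) (I' : 'I_l -> 'I_n)
  (hI : increasing_idx I) (hI' : increasing_idx I')
  (hsep : forall (j : 'I_k) (j' : 'I_l), (I j < I' j')%N) :
  forall (sigma : 'S_k) (tau : 'S_l),
    @mallows_prob R n q (fun s => induced_is s I sigma && induced_is s I' tau)
    = (@mallows_prob R n q (fun s => induced_is s I sigma)
       * @mallows_prob R n q (fun s => induced_is s I' tau))%R.
Proof.
move=> sigma tau.
pose p := \max_(j : 'I_k) (I j).+1.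
have I_lt j : I j < p by exact: (@leq_bigmax _ (fun j => (I j).+1) j).
have hp : p <= n by apply/bigmax_leqP => j _; exact: ltn_ord.
have I'_ge j : p <= I' j by apply/bigmax_leqP => j' _; exact: hsep.
have I'_lt j : I' j - p < n - p by have := ltn_ord (I' j); have := I'_ge j; lia.
pose J j : 'I_p := Ordinal (I_lt j).
pose J' j : 'I_(n - p) := Ordinal (I'_lt j).
apply: (mallows_prob_blocks_indep (P := fun a => induced_is a J sigma)
                                   (Q := fun b => induced_is b J' tau)).
- move=> s; rewrite /= induced_is_pattern.
  by apply: eq_induced_is => j; apply: val_inj.
- move=> s; rewrite /= induced_is_pattern.
  by apply: eq_induced_is => j; apply: val_inj => /=; have := I'_ge j; lia.
- by rewrite gt_eqF ?mallows_Z_gt0.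
Qed.
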